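(* Let $F$ be a continuous distribution function with a density that is symmetric about $\theta$ and unimodal, and let $0 \le \varepsilon < 1/2$ and $0 \le \delta < (1-\varepsilon)/2$. Then $$\sup_{G \in \mathcal{F}_\delta(F)} \Big[ G^{-1}\Big(\frac{1+\varepsilon}{2}\Big) - G^{-1}\Big(\frac{1-\varepsilon}{2}\Big)\Big] = F^{-1}\Big\{\frac{1+\varepsilon}{2(1-\delta)}\Big\} - F^{-1}\Big\{\frac{1-\varepsilon}{2(1-\delta)}\Big\},$$ and the supremum is approached by $G_m = (1-\delta)F + \delta\,\delta_m$ as $m \to \infty$, where $\delta_m$ is the point mass at $m$.
   Context: For a distribution function $G$, $G^{-1}(p) = \inf\{x : G(x) \ge p\}$. For $0 \le \delta < 1/2$, $\mathcal{F}_\delta(F) = \{G : G = (1-\delta)F + \delta H,\ H \text{ an arbitrary distribution on } \mathbb{R}\}$. *)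

From HB Require Import structures.
From mathcomp Require Import all_boot all_order all_algebra.
From mathcomp Require Import all_classical all_reals all_analysis.
Set Implicit Arguments. Unset Strict Implicit. Unset Printing Implicit Defensive.
Import Order.TTheory GRing.Theory Num.Theory.
Import numFieldNormedType.Exports.
Local Open Scope classical_set_scope.
Local Open Scope ring_scope.

Definition is_distfun (R : realType) (G : R -> R) : Prop :=
  [/\ {homo G : x y / x <= y},
      (forall a : R, G x @[x --> a^'+] --> G a),
      G x @[x --> -oo] --> (0:R) &
      G x @[x --> +oo] --> (1:R)].

Definition quantile (R : realType) (G : R -> R) (p : R) : R :=
  inf [set x : R | p <= G x].

Definition mixture (R : realType) (delta : R) (F H : R -> R) : R -> R :=
  fun x => (1 - delta) * F x + delta * H x.

Definition pointmass_df (R : realType) (m : R) : R -> R :=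
  fun x => if m <= x then 1 else 0.

Definition is_density (R : realType) (f F : R -> R) : Prop :=
  [/\ measurable_fun setT f,
      (forall x, 0 <= f x) &
      (forall x, (F x)%:E =
         (\int[lebesgue_measure]_(t in `]-oo, x]) (f t)%:E)%E)].

Definition sym_unimodal (R : realType) (f : R -> R) (theta : R) : Prop :=
  [/\ (forall x, f (theta + x) = f (theta - x)),
      (forall x y, theta <= x -> x <= y -> f y <= f x) &
      (forall x y, x <= y -> y <= theta -> f x <= f y)].

(* Write q = 1 - delta and W = F^{-1}((1+eps)/(2q)) - F^{-1}((1-eps)/(2q)).  For
   G = q F + delta H and a = G^{-1}((1-eps)/2) it suffices to show G(a + W) >= (1+eps)/2.
   If F(a) >= (1-eps)/(2q) this is immediate.  Otherwise, since G(a + W) - G(a) >=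
   q (F(a + W) - F(a)), it suffices that the window [a, a + W] carries F-mass at least
   eps/q, the mass of the window [x1, x1 + W] with x1 = F^{-1}((1-eps)/(2q)).  For a
   symmetric unimodal density the mass of a window of width W is symmetric about the
   window centred at theta and decreases away from it, and the constraints G(a) >= (1-eps)/2,
   H <= 1 place a between x1 and its mirror image.  Conversely, for G_m = q F + delta delta_m
   with m beyond both quantiles of F, the quantiles of G_m at q p are those of F at p, so the
   width of G_m equals W. *)

From HB Require Import structures.
From mathcomp Require Import all_boot all_order all_algebra.
From mathcomp Require Import all_classical all_reals all_analysis.
From mathcomp Require Import measurable_realfun lebesgue_integral.
From mathcomp Require Import ring lra.
Import Order.TTheory GRing.Theory Num.Theory.
Import numFieldNormedType.Exports.

Set Implicit Arguments.
Unset Strict Implicit.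
Unset Printing Implicit Defensive.

Local Open Scope classical_set_scope.
Local Open Scope ring_scope.

Section DistributionFunction.
Variables (R : realType) (G : R -> R).
Hypothesis dG : is_distfun G.

Lemma distfun_ge0 x : 0 <= G x.
Proof.
have [Gh _ G0 _] := dG.
apply: (@ler_cvg_to _ _ _ _ G (fun=> G x) _ _ G0 (cvg_cst _)).
near=> t; apply: Gh; near: t; apply: nbhs_ninfty_le; exact: num_real.
Unshelve. all: by end_near.
Qed.

Lemma distfun_le1 x : G x <= 1.
Proof.
have [Gh _ _ G1] := dG.
apply: (@ler_cvg_to _ _ _ _ (fun=> G x) G _ _ (cvg_cst _) G1).
near=> t; apply: Gh; near: t; apply: nbhs_pinfty_ge; exact: num_real.
Unshelve. all: by end_near.
Qed.

Lemma quantile_le p x : 0 < p -> p < 1 -> (quantile G p <= x) = (p <= G x).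
Proof.
move=> p0 p1; have [Gh Gr G0 G1] := dG.
set S := [set x : R | p <= G x].
have [M [_ GM]] := cvgr_lt _ G0 p p0.
have [y [_ Gy]] := cvgr_gt _ G1 p p1.
have S0 : S !=set0 by exists (y + 1); apply/ltW/Gy; rewrite ltrDl.
have lbS : lbound S (M - 1).
  move=> z Sz; rewrite leNgt; apply/negP => zM.
  have : G z < p by apply: le_lt_trans (Gh _ _ (ltW zM)) (GM _ _); rewrite ltrBlDr ltrDl.
  by rewrite ltNge Sz.
apply/idP/idP => [qx|px]; last by apply: ge_inf => //; exists (M - 1).
suff Gq : p <= G (quantile G p) by apply: le_trans Gq (Gh _ _ qx).
apply: (@ler_cvg_to _ _ _ _ (fun=> p) G _ _ (cvg_cst p) (Gr _)).
near=> z.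
have /(inf_lt S0) [w Sw wz] : quantile G p < z by near: z; exact: nbhs_right_gt.
exact: le_trans Sw (Gh _ _ (ltW wz)).
Unshelve. all: by end_near.
Qed.

Lemma quantile_ge p : 0 < p -> p < 1 -> p <= G (quantile G p).
Proof. by move=> p0 p1; rewrite -quantile_le. Qed.

Lemma quantile_homo p p' :
  0 < p -> p <= p' -> p' < 1 -> quantile G p <= quantile G p'.
Proof.
move=> p0 pp' p'1; have p1 := le_lt_trans pp' p'1.
by rewrite quantile_le // (le_trans pp') // quantile_ge // (lt_le_trans p0).
Qed.

Lemma quantile_cont p : continuous G -> 0 < p -> p < 1 -> G (quantile G p) = p.
Proof.
move=> cG p0 p1; apply/le_anti; rewrite quantile_ge // andbT.
apply: (@ler_cvg_to _ _ _ _ G (fun=> p) _ _ (cvg_at_left_filter (cG _)) (cvg_cst p)).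
near=> z; apply: ltW; rewrite ltNge -quantile_le // -ltNge.
near: z; exact: nbhs_left_lt.
Unshelve. all: by end_near.
Qed.

End DistributionFunction.

Lemma mixture_distfun (R : realType) (delta : R) (F H : R -> R) :
  is_distfun F -> is_distfun H -> 0 <= delta -> delta <= 1 ->
  is_distfun (mixture delta F H).
Proof.
move=> [Fh Fr F0 F1] [Hh Hr H0 H1] d0 d1.
have mixD (s : set_system R) (Fs : Filter s) u v l :
    F x @[x --> s] --> u -> H x @[x --> s] --> v -> (1 - delta) * u + delta * v = l ->
    mixture delta F H x @[x --> s] --> l.
  by move=> Fu Hv <-; apply: cvgD; apply: cvgM => //; exact: cvg_cst.
split.
- move=> x y xy; rewrite /mixture.
  by apply: lerD; apply: ler_wpM2l; rewrite ?subr_ge0 //; [apply: Fh | apply: Hh].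
- by move=> a; exact: mixD.
- by apply: (mixD _ _ _ _ _ F0 H0); rewrite !mulr0 addr0.
- by apply: (mixD _ _ _ _ _ F1 H1); rewrite !mulr1 subrK.
Qed.

Lemma pointmass_distfun (R : realType) (m : R) : is_distfun (pointmass_df m).
Proof.
rewrite /pointmass_df; split.
- move=> x y xy; case: ifP => mx; case: ifP => my //.
  by rewrite (le_trans mx xy) in my.
- move=> a; apply: cvg_near_cst; have [ma|am] := leP m a.
  + near=> x; rewrite ifT //; apply: le_trans ma (ltW _); near: x.
    exact: nbhs_right_gt.
  + near=> x; rewrite ifF //; apply/negbTE; rewrite -ltNge; near: x.
    exact: nbhs_right_lt.
- apply: cvg_near_cst; near=> x; rewrite ifF //; apply/negbTE; rewrite -ltNge.
  near: x; apply: nbhs_ninfty_lt; exact: num_real.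
- apply: cvg_near_cst; near=> x; suff -> : m <= x by [].
  near: x; apply: nbhs_pinfty_ge; exact: num_real.
Unshelve. all: by end_near.
Qed.

Section SymmetricUnimodal.
Variables (R : realType) (f F : R -> R) (theta : R).
Hypotheses (dF : is_distfun F) (fF : is_density f F) (fsym : sym_unimodal f theta).

Let f_ge0 x : 0 <= f x. Proof. by case: fF. Qed.

Lemma cdf_diff_bounds a b lo hi : a <= b -> 0 <= lo ->
  (forall z, a < z -> z <= b -> lo <= f z <= hi) ->
  (b - a) * lo <= F b - F a <= (b - a) * hi.
Proof.
move=> ab lo0 fz; have [mf _ FE] := fF.
have mfE := proj2 (measurable_EFinP _ _) mf.
have FbE : (F b)%:E = ((F a)%:E + \int[lebesgue_measure]_(t in `]a, b]) (f t)%:E)%E.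
  rewrite !FE -ge0_integral_setU //=.
  - by rewrite -itv_bndbnd_setU // bnd_simp.
  - exact: measurable_funS mfE.
  - by move=> x _; rewrite lee_fin.
  - apply/disj_setPS => x [] /=; rewrite !in_itv /= => xa /andP[ax _].
    by move: (le_lt_trans xa ax); rewrite ltxx.
have abE : lebesgue_measure `]a, b] = (b - a)%:E.
  rewrite lebesgue_measure_itv /= lte_fin.
  have [ab'|ba] := ltP a b; first by rewrite EFinB.
  have -> : a = b by apply/le_anti; rewrite ab ba.
  by rewrite subrr.
have intE : (\int[lebesgue_measure]_(t in `]a, b]) (f t)%:E = (F b - F a)%:E)%E.
  by rewrite EFinB FbE addeAC subee // add0e.
have int_cst c : (\int[lebesgue_measure]_(t in `]a, b]) (cst c%:E) t = ((b - a) * c)%:E)%E.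
  by rewrite integral_cst //= abE -EFinM mulrC.
apply/andP; split; rewrite -lee_fin -intE -int_cst; apply: ge0_le_integral => //.
all: try exact: measurable_funS mfE.
all: move=> x; rewrite /= in_itv /= lee_fin => /andP[ax xb].
all: by have /andP[lof fhi] := fz x ax xb; rewrite ?f_ge0 ?(le_trans lo0).
Qed.

Lemma cdf_diff_boundsR a b : theta <= a -> a <= b ->
  (b - a) * f b <= F b - F a <= (b - a) * f a.
Proof.
have [_ fR _] := fsym; move=> ta ab; apply: cdf_diff_bounds => // z az zb.
apply/andP; split; apply: fR => //; last exact: ltW.
exact: le_trans ta (ltW az).
Qed.

Lemma cdf_diff_boundsL a b : a <= b -> b <= theta ->
  (b - a) * f a <= F b - F a <= (b - a) * f b.
Proof.
have [_ _ fL] := fsym; move=> ab bt; apply: cdf_diff_bounds => // z az zb.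
apply/andP; split; apply: fL => //; first exact: ltW.
exact: le_trans zb bt.
Qed.

(* Mirror-image steps of length h carry masses within h (f(kh) - f((k+1)h)) of each other,
   and these errors telescope. *)
Lemma cdf_asym_le (h : R) (k : nat) : 0 <= h ->
  `|F (theta + k%:R * h) + F (theta - k%:R * h) - 2 * F theta|
     <= h * (f theta - f (theta + k%:R * h)).
Proof.
have [fsymE _ _] := fsym; move=> h0.
elim: k => [|k IH].
  by rewrite mul0r addr0 subr0 mulr2n mulrDl mul1r subrr normr0 subrr mulr0.
set c := k%:R * h.
have c0 : 0 <= c by rewrite mulr_ge0.
have -> : k.+1%:R * h = c + h by rewrite /c -addn1 natrD mulrDl mul1r.
have /andP[r1 r2] : (theta + (c + h) - (theta + c)) * f (theta + (c + h))
    <= F (theta + (c + h)) - F (theta + c)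
    <= (theta + (c + h) - (theta + c)) * f (theta + c).
  by apply: cdf_diff_boundsR; lra.
have /andP[l1 l2] : (theta - c - (theta - (c + h))) * f (theta - (c + h))
    <= F (theta - c) - F (theta - (c + h))
    <= (theta - c - (theta - (c + h))) * f (theta - c).
  by apply: cdf_diff_boundsL; lra.
have hR : theta + (c + h) - (theta + c) = h by lra.
have hL : theta - c - (theta - (c + h)) = h by lra.
rewrite hR in r1 r2; rewrite hL in l1 l2.
rewrite -!fsymE in l1 l2.
move: IH; rewrite !ler_norml !mulrBr => /andP[i1 i2].
apply/andP; split; lra.
Qed.

Lemma cdf_sym u : 0 <= u -> F (theta + u) + F (theta - u) = 2 * F theta.
Proof.
move=> u0; apply/eqP; rewrite -subr_eq0 -normr_eq0; apply/eqP.
set s := `|_|.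
(* With steps h = u / n, the defect is at most u * f theta / n for every n. *)
have defect_le n : s * n.+1%:R <= u * f theta.
  have n0 : 0 < n.+1%:R :> R by rewrite ltr0n.
  have := cdf_asym_le n.+1 (divr_ge0 u0 (ltW n0)).
  rewrite mulrC divfK ?gt_eqF // -/s => sle.
  rewrite -ler_pdivlMr //; apply: le_trans sle _.
  by rewrite mulrAC ler_pM2r ?invr_gt0 // ler_wpM2l // gerBl.
apply/le_anti; rewrite normr_ge0 andbT leNgt; apply/negP => s0.
have := archi_boundP (divr_ge0 (mulr_ge0 u0 (f_ge0 theta)) (ltW s0)).
rewrite ltr_pdivrMr // => bound_gt.
have := defect_le (Num.bound (u * f theta / s)).
rewrite -addn1 natrD mulrDr mulr1 mulrC; lra.
Qed.

Lemma cdf_reflect z : F (2 * theta - z) + F z = 2 * F theta.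
Proof.
have [zt|tz] := leP z theta.
- have := cdf_sym (_ : 0 <= theta - z).
  have -> : theta + (theta - z) = 2 * theta - z by lra.
  have -> : theta - (theta - z) = z by lra.
  by apply; lra.
- have := cdf_sym (_ : 0 <= z - theta).
  have -> : theta + (z - theta) = z by lra.
  have -> : theta - (z - theta) = 2 * theta - z by lra.
  by move=> sym; rewrite addrC sym //; lra.
Qed.

Lemma cdf_center : F theta = 1 / 2.
Proof.
have [_ _ F0 F1] := dF.
have ge1 : 1 <= 2 * F theta.
  apply: (@ler_cvg_to _ _ _ _ F (fun=> 2 * F theta) _ _ F1 (cvg_cst _)).
  near=> t; have := cdf_reflect t; have := distfun_ge0 dF (2 * theta - t); lra.
have le1 : 2 * F theta - 1 <= 0.
  apply: (@ler_cvg_to _ _ _ _ (fun=> 2 * F theta - 1) F _ _ (cvg_cst _) F0).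
  near=> t; have := cdf_reflect t; have := distfun_le1 dF (2 * theta - t); lra.
lra.
Unshelve. all: by end_near.
Qed.

(* A flat stretch of F left of theta forces f = 0 there, hence F is constant further left. *)
Lemma cdf_ltr_left x x' : x < x' -> x' <= theta -> 0 < F x' -> F x < F x'.
Proof.
have [Fh _ F0 _] := dF; move=> xx' x't Fx'0.
rewrite lt_neqAle Fh ?(ltW xx') // andbT; apply/negP => /eqP Fxx'.
have fx0 : f x = 0.
  have /andP[+ _] := cdf_diff_boundsL (ltW xx') x't.
  by rewrite Fxx' subrr pmulr_rle0 ?subr_gt0 // => fx_le0; apply/le_anti/andP.
have Fleft z : z <= x -> F z = F x.
  move=> zx; have /andP[_] := cdf_diff_boundsL zx (le_trans (ltW xx') x't).
  by rewrite fx0 mulr0 subr_le0 => Fxz; apply/le_anti; rewrite Fxz Fh.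
suff : F x <= 0 by rewrite Fxx'; lra.
apply: (@ler_cvg_to _ _ _ _ (fun=> F x) F _ _ (cvg_cst _) F0).
near=> t; rewrite Fleft //; near: t; apply: nbhs_ninfty_le; exact: num_real.
Unshelve. all: by end_near.
Qed.

Definition window W x := F (x + W) - F x.

Lemma window_decr_right W x x' : 0 <= W -> theta <= x -> x <= x' ->
  window W x' <= window W x.
Proof.
have [_ fR _] := fsym; move=> W0 tx xx'; rewrite /window.
have tx' := le_trans tx xx'.
have d0 : 0 <= x' - x by rewrite subr_ge0.
have [x'W|Wx'] := leP x' (x + W).
- have xWx'W : x + W <= x' + W by rewrite lerD2r.
  have /andP[_ hi] := cdf_diff_boundsR (le_trans tx' x'W) xWx'W.
  have /andP[lo _] := cdf_diff_boundsR tx xx'.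
  have := ler_wpM2l d0 (fR _ _ tx' x'W).
  have dE : x' + W - (x + W) = x' - x by lra.
  rewrite dE in hi; lra.
- have xW : x <= x + W by rewrite lerDl.
  have x'W : x' <= x' + W by rewrite lerDl.
  have /andP[_ hi] := cdf_diff_boundsR tx' x'W.
  have /andP[lo _] := cdf_diff_boundsR tx xW.
  have := ler_wpM2l W0 (fR _ _ (le_trans tx xW) (ltW Wx')).
  have dE' : x' + W - x' = W by lra.
  have dE : x + W - x = W by lra.
  rewrite dE' in hi; rewrite dE in lo; lra.
Qed.

Lemma window_reflect W x : window W (2 * theta - W - x) = window W x.
Proof.
rewrite /window; have := cdf_reflect x; have := cdf_reflect (x + W).
have -> : 2 * theta - W - x + W = 2 * theta - x by lra.
have -> : 2 * theta - W - x = 2 * theta - (x + W) by lra.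
lra.
Qed.

(* The roles of position and width are exchanged: by [cdf_reflect], comparing the two
   windows of width W at x and x' amounts to comparing two windows of width x' - x. *)
Lemma window_decr_left W x x' : 0 <= W -> theta - W / 2 <= x -> x <= x' ->
  x' <= theta -> window W x' <= window W x.
Proof.
move=> W0 mx xx' x't; rewrite /window.
have : F (x' + W) - F (x + W) <= F (2 * theta - x) - F (2 * theta - x').
  have := @window_decr_right (x' - x) (2 * theta - x') (x + W); rewrite /window.
  have -> : x + W + (x' - x) = x' + W by lra.
  have -> : 2 * theta - x' + (x' - x) = 2 * theta - x by lra.
  by apply; lra.
have := cdf_reflect x; have := cdf_reflect x'; lra.
Qed.

Lemma window_decr W x x' : 0 <= W -> theta - W / 2 <= x -> x <= x' ->
  window W x' <= window W x.
Proof.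
move=> W0 mx xx'.
have [tx|xt] := leP theta x; first exact: window_decr_right.
have [x't|tx'] := leP x' theta; first exact: window_decr_left.
apply: le_trans (window_decr_left W0 mx (ltW xt) (lexx theta)).
exact: window_decr_right W0 (lexx theta) (ltW tx').
Qed.

Lemma window_ge_between W x a : 0 <= W -> 2 * theta - W - x <= a -> a <= x ->
  window W x <= window W a.
Proof.
move=> W0 xa ax.
have [ma|am] := leP (theta - W / 2) a; first exact: window_decr.
rewrite -(window_reflect W a); apply: window_decr; lra.
Qed.

Hypothesis cF : continuous F.

Lemma window_quantile_ge pl pu a : 0 < pl -> pl <= pu -> pu < 1 -> 1 / 2 <= pu ->
  1 - pu <= F a -> a <= quantile F pl ->
  pu - pl <= window (quantile F pu - quantile F pl) a.
Proof.
move=> pl0 plpu pu1 pu2 Fa ax1.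
set x1 := quantile F pl; set y1 := quantile F pu.
have Fx1 : F x1 = pl by apply: quantile_cont => //; lra.
have Fy1 : F y1 = pu by apply: quantile_cont => //; lra.
have x1y1 : x1 <= y1 := quantile_homo dF pl0 plpu pu1.
have ty1 : theta <= y1.
  rewrite leNgt; apply/negP => yt.
  have : F y1 < F theta by apply: cdf_ltr_left => //; rewrite cdf_center.
  by rewrite Fy1 cdf_center; lra.
have uy1 : F (2 * theta - y1) = 1 - pu.
  by have := cdf_reflect y1; rewrite Fy1 cdf_center; lra.
have ua : 2 * theta - y1 <= a.
  rewrite leNgt; apply/negP => au.
  have : F a < F (2 * theta - y1) by apply: cdf_ltr_left => //; lra.
  lra.
have := @window_ge_between (y1 - x1) x1 a; rewrite /window.
have -> : x1 + (y1 - x1) = y1 by lra.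
by rewrite Fx1 Fy1; apply; lra.
Qed.

Lemma mixture_quantile_width_le eps delta H :
  0 <= eps -> 0 <= delta -> delta < (1 - eps) / 2 -> is_distfun H ->
  quantile (mixture delta F H) ((1 + eps) / 2)
    - quantile (mixture delta F H) ((1 - eps) / 2)
  <= quantile F ((1 + eps) / (2 * (1 - delta)))
    - quantile F ((1 - eps) / (2 * (1 - delta))).
Proof.
move=> e0 d0 d1 dH; have [Fh _ _ _] := dF; have [Hh _ _ _] := dH.
have q0 : 0 < 1 - delta by lra.
set pl := (1 - eps) / (2 * (1 - delta)); set pu := (1 + eps) / (2 * (1 - delta)).
set x1 := quantile F pl; set y1 := quantile F pu.
have plE : (1 - delta) * pl = (1 - eps) / 2 by rewrite /pl; field; lra.
have puE : (1 - delta) * pu = (1 + eps) / 2 by rewrite /pu; field; lra.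
have pl0 : 0 < pl by rewrite /pl divr_gt0 //; lra.
have plpu : pl <= pu by rewrite /pl /pu ler_pM2r ?invr_gt0; lra.
have pu1 : pu < 1 by rewrite /pu ltr_pdivrMr; lra.
have pu2 : 1 / 2 <= pu by rewrite /pu ler_pdivlMr; lra.
have x1y1 : x1 <= y1 := quantile_homo dF pl0 plpu pu1.
set G := mixture delta F H.
have dG : is_distfun G by apply: mixture_distfun => //; lra.
set a := quantile G ((1 - eps) / 2).
have Ga : (1 - eps) / 2 <= G a by apply: quantile_ge => //; lra.
rewrite lerBlDl (quantile_le dG); [|lra|lra].
have GaW : (1 - delta) * F (a + (y1 - x1)) + delta * H a <= G (a + (y1 - x1)).
  by rewrite lerD2l ler_wpM2l // Hh // lerDl subr_ge0.
apply: le_trans GaW; rewrite /G /mixture in Ga.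
have H01 : 0 <= delta * H a <= delta.
  by rewrite mulr_ge0 ?(distfun_ge0 dH) // ler_piMr ?(distfun_le1 dH).
have [plFa|Fapl] := leP pl (F a).
- have x1a : x1 <= a by rewrite /x1 (quantile_le dF) //; lra.
  have : pu <= F (a + (y1 - x1)).
    apply: le_trans (quantile_ge dF (lt_le_trans pl0 plpu) pu1) (Fh _ _ _); lra.
  move/(ler_wpM2l (ltW q0)); lra.
- have ax1 : a <= x1.
    by apply: ltW; rewrite ltNge /x1 (quantile_le dF); [rewrite -ltNge | |]; lra.
  have Fa : 1 - pu <= F a.
    have : (1 - delta) * (1 - pu) <= (1 - delta) * F a by lra.
    by rewrite ler_pM2l.
  have := window_quantile_ge pl0 plpu pu1 pu2 Fa ax1.
  rewrite /window => /(ler_wpM2l (ltW q0)); lra.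
Qed.

End SymmetricUnimodal.

Lemma quantile_mixture_pointmass (R : realType) (F : R -> R) (delta p m : R) :
  is_distfun F -> 0 <= delta -> delta < 1 -> 0 < p -> p < 1 -> quantile F p < m ->
  quantile (mixture delta F (pointmass_df m)) ((1 - delta) * p) = quantile F p.
Proof.
move=> dF d0 d1 p0 p1 xm.
have dG : is_distfun (mixture delta F (pointmass_df m)).
  by apply: mixture_distfun => //; [exact: pointmass_distfun | exact: ltW].
have q0 : 0 < 1 - delta by rewrite subr_gt0.
have qp0 : 0 < (1 - delta) * p by rewrite mulr_gt0.
have qp1 : (1 - delta) * p < 1 by apply: le_lt_trans p1; apply: ler_piMl; lra.
have Fxp := quantile_ge dF p0 p1.
apply/le_anti/andP; split.
  rewrite (quantile_le dG) // /mixture /pointmass_df.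
  have : (1 - delta) * p <= (1 - delta) * F (quantile F p) by rewrite ler_pM2l.
  case: ifP => _; lra.
set z := quantile (mixture _ _ _) _.
have [mz|zm] := leP m z; first exact: ltW (lt_le_trans xm mz).
rewrite (quantile_le dF) //.
have := quantile_ge dG qp0 qp1; rewrite -/z /mixture /pointmass_df.
by rewrite ifF ?mulr0 ?addr0 ?ler_pM2l //; apply/negbTE; rewrite -ltNge.
Qed.

Theorem mainTheorem6 (R : realType) (F f : R -> R) (theta eps delta : R) :
  is_distfun F -> continuous F ->
  is_density f F -> sym_unimodal f theta ->
  0 <= eps -> eps < 1 / 2 ->
  0 <= delta -> delta < (1 - eps) / 2 ->
  let pu := (1 + eps) / 2 in
  let pl := (1 - eps) / 2 in
  let v := quantile F ((1 + eps) / (2 * (1 - delta)))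
           - quantile F ((1 - eps) / (2 * (1 - delta))) in
  ereal_sup [set ((quantile (mixture delta F H) pu
                   - quantile (mixture delta F H) pl)%:E)%E
            | H in [set H : R -> R | is_distfun H]] = v%:E
  /\
  (quantile (mixture delta F (pointmass_df m)) pu
   - quantile (mixture delta F (pointmass_df m)) pl) @[m --> +oo] --> v.
Proof.
move=> dF cF fF fsym e0 _ d0 d1 pu pl v.
set lo := (1 - eps) / (2 * (1 - delta)); set hi := (1 + eps) / (2 * (1 - delta)).
have q0 : 0 < 1 - delta by lra.
have lo0 : 0 < lo by rewrite /lo divr_gt0 //; lra.
have lohi : lo <= hi by rewrite /lo /hi ler_pM2r ?invr_gt0; lra.
have hi1 : hi < 1 by rewrite /hi ltr_pdivrMr; lra.
have width m : quantile F hi < m ->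
    quantile (mixture delta F (pointmass_df m)) pu
    - quantile (mixture delta F (pointmass_df m)) pl = v.
  move=> him; have lom := le_lt_trans (quantile_homo dF lo0 lohi hi1) him.
  have -> : pu = (1 - delta) * hi by rewrite /pu /hi; field; lra.
  have -> : pl = (1 - delta) * lo by rewrite /pl /lo; field; lra.
  rewrite !quantile_mixture_pointmass //; lra.
split.
- apply/le_anti/andP; split.
  + apply: ge_ereal_sup => _ [H dH <-]; rewrite lee_fin.
    exact: (mixture_quantile_width_le dF fF fsym cF e0 d0 d1 dH).
  + apply: ereal_sup_ubound; exists (pointmass_df (quantile F hi + 1)).
      exact: pointmass_distfun.
    by rewrite width // ltrDl.
- apply: cvg_near_cst; near=> m; apply: width; near: m.
  apply: nbhs_pinfty_gt; exact: num_real.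
Unshelve. all: by end_near.
Qed.
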